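(* \[ \sum_{\substack{a\ge b,\ c\ge d\\ ad-bc=1}}\frac{1}{(ac+bd)\big(a(a+c)+b(b+d)\big)\big((a+c)c+(b+d)d\big)}=1-\frac{\pi}{4}, \] where the sum is over all nonnegative integers $a,b,c,d$ with $a\ge b$, $c\ge d$ and $ad-bc=1$. *)

From mathcomp Require Import all_boot all_order all_algebra.
From mathcomp Require Import all_classical all_reals all_analysis.
Set Implicit Arguments. Unset Strict Implicit. Unset Printing Implicit Defensive.
Import Order.TTheory GRing.Theory Num.Theory.
Local Open Scope classical_set_scope.
Local Open Scope ring_scope.

Definition idx_set : set (nat * nat * nat * nat) :=
  [set x | let: (a, b, c, d) := x in
           [/\ (b <= a)%N, (d <= c)%N & (a * d = b * c + 1)%N]].

Definition summand (R : realType) (x : nat * nat * nat * nat) : R :=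
  let: (a, b, c, d) := x in
  1 / (((a * c + b * d)%:R : R) * ((a * (a + c) + b * (b + d))%:R : R)
        * (((a + c) * c + (b + d) * d)%:R : R)).

From mathcomp Require Import all_boot all_order all_algebra.
From mathcomp Require Import all_classical all_reals all_analysis.
From mathcomp Require Import zify ring lra.
Set Implicit Arguments. Unset Strict Implicit. Unset Printing Implicit Defensive.
Import Order.TTheory GRing.Theory Num.Theory numFieldNormedType.Exports.
Local Open Scope classical_set_scope.
Local Open Scope ring_scope.

(** The quadruples (a, b, c, d) of the sum, read as matrices [[a, b], [c, d]] of
    SL_2(N), form the complete binary tree rooted at (1, 0, 1, 1) in which the
    children of (a, b, c, d) are (a, b, a + c, b + d) and (a + c, b + d, c, d).
    Write q = ac + bd, and q', q'' for its values at the two children. Lagrange's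
    identity gives q' q'' = q (q' + q'') + 1, which says both that
    atan (1/q) = atan (1/q') + atan (1/q'') and that the summand 1 / (q q' q'')
    equals D x - D x' - D x'' for D = 1/q - atan (1/q). Over the first n levels
    of the tree the sum therefore telescopes to D root = 1 - pi/4 minus the sum
    of D over level n. On that level q >= n + 1 and D <= atan (1/q) / q^2,
    while the arctangents of a level add up to atan 1 = pi/4; so the remainder
    is at most 1/(n + 1). *)

Lemma esum_cofinal (R : realType) (T : choiceType) (A : set T) (u : T -> R)
    (S : nat -> set T) (l : R) :
  (forall x, A x -> 0 <= u x) ->
  (forall n, fsets A (S n)) ->
  (forall F, fsets A F -> exists n, F `<=` S n) ->
  (forall n, \sum_(x \in S n) u x <= l) ->
  (forall e, 0 < e -> exists n, l - e <= \sum_(x \in S n) u x) ->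
  \esum_(x in A) (u x)%:E = l%:E.
Proof.
move=> u_ge0 SA cofinal le_l approx; apply/eqP; rewrite eq_le; apply/andP; split.
- apply: ge_ereal_sup => _ [F [finF FA] <-].
  have [n FS] := cofinal F (conj finF FA); have [finS SnA] := SA n.
  apply: (le_trans (lee_fsum_nneg_subset finF finS _ _)).
  + by move=> x; rewrite !inE; exact: FS.
  + by move=> x; rewrite !inE => /andP[_ /set_mem /SnA /u_ge0]; rewrite lee_fin.
  by rewrite fsumEFin // lee_fin.
- apply/lee_subgt0Pr => e /approx[n le_sum]; apply: esum_ge; exists (S n) => //.
  by rewrite fsumEFin ?lee_fin //; case: (SA n).
Qed.

Lemma fsets_nondecreasing_bigcup (T : choiceType) (A : set T) (S : nat -> set T) :
  {homo S : m n / (m <= n)%N >-> m `<=` n} -> A `<=` \bigcup_n S n ->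
  forall F, fsets A F -> exists n, F `<=` S n.
Proof.
move=> S_mono AS F [/finite_seqP[s ->] sA]; elim: s sA => [|x s IH] sA.
  by exists 0%N => y /=; rewrite in_nil.
have [|m sm] := IH; first by move=> y ys; apply: sA; rewrite /= in_cons ys orbT.
have [k _ xk] := AS x (sA x (mem_head x s)).
exists (maxn m k) => y /=; rewrite in_cons => /orP[/eqP ->|ys].
  exact: S_mono (leq_maxr m k) _ xk.
exact: S_mono (leq_maxl m k) _ (sm y ys).
Qed.

Lemma invf_mul3_split (F : fieldType) (q l s : F) : q != 0 -> l != 0 -> s != 0 ->
  l * s = q * (l + s) + 1 -> (q * l * s)^-1 = q^-1 - l^-1 - s^-1.
Proof.
move=> q0 l0 s0 lsE; rewrite -[LHS]mul1r.
have -> : 1 = l * s - q * (l + s) by rewrite lsE; ring.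
by field; rewrite q0 l0 s0.
Qed.

Section Arctangent.
Variable R : realType.
Implicit Types t x y : R.

Lemma atan_gt0 t : 0 < t -> 0 < atan t.
Proof. by move=> t0; rewrite -(@atan0 R) lt_atan. Qed.

Lemma sub_atan_bounds t : 0 < t -> 0 <= t - atan t <= t ^+ 2 * atan t.
Proof.
move=> t0.
have datan c : c \in `]0, t[ -> is_derive c 1 atan (1 + c ^+ 2)^-1.
  by move=> _; exact: is_derive1_atan.
have catan : {within `[0, t], continuous atan}.
  by apply: derivable_within_continuous => c _; exact: ex_derive.
have [c /[!in_itv]/= /andP[c_gt0 c_lt_t]] := MVT t0 datan catan.
rewrite atan0 !subr0 => ->.
have c2_gt0 : 0 < 1 + c ^+ 2 by rewrite ltr_pwDl ?sqr_ge0.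
set s := (1 + c ^+ 2)^-1.
have s0 : 0 < s by rewrite invr_gt0.
have sE : s * (1 + c ^+ 2) = 1 by rewrite mulVf ?gt_eqF.
have -> : t - s * t = s * t * c ^+ 2 by rewrite -[t in t - _]mul1r -sE; ring.
apply/andP; split; first by rewrite !mulr_ge0 ?sqr_ge0 ?ltW.
rewrite [t ^+ 2 * _]mulrC ler_pM2l ?mulr_gt0 //; nra.
Qed.

Lemma atanD x y : 0 < x -> 0 < y -> x * y < 1 ->
  atan x + atan y = atan ((x + y) / (1 - x * y)).
Proof.
move=> x0 y0 xy1; set a := atan x; set b := atan y.
have [ca cb] : 0 < cos a /\ 0 < cos b by split; apply: cos_gt0_pihalf;
  rewrite atan_gtNpi2 atan_ltpi2.
have [ta tb] : tan a = x /\ tan b = y by split; exact: atanK.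
have cosab : cos (a + b) = cos a * cos b * (1 - x * y).
  by rewrite cosD -ta -tb /tan; field; rewrite !gt_eqF.
have [a0 b0] : 0 < a /\ 0 < b by split; exact: atan_gt0.
have pi0 := pi_gt0 R.
have ab_pi2 : a + b < pi / 2.
  have [api bpi] : a < pi / 2 /\ b < pi / 2 by split; exact: atan_ltpi2.
  rewrite -ltr_cos ?cos_pihalf ?cosab ?mulr_gt0 ?subr_gt0 // in_itv /=; lra.
rewrite -[LHS]tanK; last by rewrite in_itv /= ab_pi2 andbT; lra.
by rewrite tanD ?gt_eqF // ta tb.
Qed.

Lemma atan_inv_split (q l s : R) : 0 < q -> 0 < l -> 0 < s ->
  l * s = q * (l + s) + 1 -> atan q^-1 = atan l^-1 + atan s^-1.
Proof.
move=> q0 l0 s0 lsE.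
rewrite atanD ?invr_gt0 //; last by rewrite -invfM invf_lt1 ?mulr_gt0 // lsE; nra.
congr atan; have ls1 : l * s - 1 = q * (l + s) by rewrite lsE; ring.
have lsq0 : q * (l + s) != 0 by rewrite mulf_neq0 ?gt_eqF ?addr_gt0.
have -> : (l^-1 + s^-1) / (1 - l^-1 * s^-1) = (l + s) / (l * s - 1).
  by field; rewrite ls1 lsq0 !gt_eqF.
by rewrite ls1 invfM mulrA mulrAC divff ?mul1r // gt_eqF ?addr_gt0.
Qed.

End Arctangent.

Definition quad := (nat * nat * nat * nat)%type.

Definition left_child (x : quad) : quad :=
  let: (a, b, c, d) := x in (a, b, a + c, b + d)%N.
Definition right_child (x : quad) : quad :=
  let: (a, b, c, d) := x in (a + c, b + d, c, d)%N.
Definition child (k : bool) : quad -> quad :=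
  if k then left_child else right_child.

Definition descend (z : quad) (w : seq bool) : quad :=
  foldl (fun x k => child k x) z w.

Fixpoint subtree (n : nat) (z : quad) : seq quad :=
  if n is n'.+1 then z :: subtree n' (left_child z) ++ subtree n' (right_child z)
  else [::].

Fixpoint level (n : nat) (z : quad) : seq quad :=
  if n is n'.+1 then level n' (left_child z) ++ level n' (right_child z)
  else [:: z].

Definition root : quad := (1, 0, 1, 1)%N.

Definition rowdot (x : quad) : nat := let: (a, b, c, d) := x in (a * c + b * d)%N.

Lemma idx_set_root : idx_set root.
Proof. by []. Qed.

Lemma idx_set_child k x : idx_set x -> idx_set (child k x).
Proof. by case: k; case: x => [[[a b] c] d] [/= *]; split; nia. Qed.

Lemma idx_set_descend z w : idx_set z -> idx_set (descend z w).
Proof. by elim: w z => //= k w IH z /(idx_set_child k) /IH. Qed.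

Lemma rowdot_gt0 x : idx_set x -> (0 < rowdot x)%N.
Proof. by case: x => [[[a b] c] d] [/= *]; nia. Qed.

Lemma rowdot_child_gt k x : idx_set x -> (rowdot x < rowdot (child k x))%N.
Proof. by case: k; case: x => [[[a b] c] d] [/= *]; nia. Qed.

Lemma rowdot_descend z w : idx_set z -> (rowdot z <= rowdot (descend z w))%N.
Proof.
elim: w z => //= k w IH z zI.
exact: leq_trans (ltnW (rowdot_child_gt k zI)) (IH _ (idx_set_child k zI)).
Qed.

(* Lagrange: (a^2 + b^2)(c^2 + d^2) - (ac + bd)^2 = (ad - bc)^2. *)
Lemma rowdot_children x : idx_set x ->
  (rowdot (left_child x) * rowdot (right_child x) =
   rowdot x * (rowdot (left_child x) + rowdot (right_child x)) + 1)%N.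
Proof.
case: x => [[[a b] c] d] [/= _ _ det].
have det2 : (a * d * (a * d) = (b * c + 1) * (b * c + 1))%N by rewrite det.
nia.
Qed.

Lemma child_inj k k' x y : idx_set x -> idx_set y ->
  child k x = child k' y -> k = k' /\ x = y.
Proof.
case: x => [[[a b] c] d]; case: y => [[[a' b'] c'] d'] [/= ? ? ?] [/= ? ? ?].
case: k; case: k' => /= -[e1 e2 e3 e4]; try (split=> //; congr (_, _, _, _); lia).
all: exfalso; lia.
Qed.

Lemma descend_rcons z w k : descend z (rcons w k) = child k (descend z w).
Proof. by rewrite /descend foldl_rcons. Qed.

Lemma descend_rcons_neq z w k : idx_set z -> descend z (rcons w k) != z.
Proof.
move=> zI; apply/eqP => e; have := rowdot_child_gt k (idx_set_descend w zI).
by rewrite -descend_rcons e; have := rowdot_descend w zI; lia.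
Qed.

Lemma descend_inj z : idx_set z -> injective (descend z).
Proof.
move=> zI w1 w2; elim/last_ind: w1 w2 => [|w1 k1 IH] w2; case/lastP: w2 => [|w2 k2] //.
- by move=> /esym /eqP; rewrite (negbTE (descend_rcons_neq w2 k2 zI)).
- by move=> /eqP; rewrite (negbTE (descend_rcons_neq w1 k1 zI)).
- rewrite !descend_rcons => /child_inj[]; try exact: idx_set_descend.
  by move=> -> /IH ->.
Qed.

Lemma idx_set_rootVchild x : idx_set x ->
  x = root \/ exists k p, idx_set p /\ x = child k p.
Proof.
case: x => [[[a b] c] d] [/= ba dc det].
have [ac|ca|ac] := ltngtP a c.
- by right; exists true, (a, b, c - a, d - b)%N; split; [split|congr (_, _, _, _)] => /=; nia.
- by right; exists false, (a - c, b - d, c, d)%N; split; [split|congr (_, _, _, _)] => /=; nia.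
- subst c; left; have /eqP : (a * (d - b) = 1)%N by rewrite mulnBr [(a * b)%N]mulnC; lia.
  by rewrite muln_eq1 => /andP[/eqP a1 _]; subst a; congr (_, _, _, _); lia.
Qed.

Lemma descend_root_surj x : idx_set x -> exists w, x = descend root w.
Proof.
have [n] := ubnP (rowdot x); elim: n x => // n IH x lt_xn /idx_set_rootVchild.
case=> [->|[k [p [pI xE]]]]; first by exists [::].
rewrite {}xE in lt_xn *.
have [|w ->] := IH p _ pI; first by have := rowdot_child_gt k pI; lia.
by exists (rcons w k); rewrite descend_rcons.
Qed.

Lemma mem_subtree n z x :
  x \in subtree n z <-> exists2 w, (size w < n)%N & x = descend z w.
Proof.
elim: n z x => [|n IH] z x /=; first by split=> // -[].
rewrite in_cons mem_cat; split.
- case/or3P => [/eqP ->|/IH[w sw ->]|/IH[w sw ->]]; first by exists [::].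
  + by exists (true :: w).
  + by exists (false :: w).
- case=> -[_ ->|[] w /= sw ->]; first by rewrite eqxx.
  + by rewrite (IH (left_child z) _).2 ?orbT //; exists w.
  + by rewrite (IH (right_child z) _).2 ?orbT //; exists w.
Qed.

Lemma subtree_mono z :
  {homo (fun n => [set` subtree n z]) : m n / (m <= n)%N >-> m `<=` n}.
Proof.
move=> m n mn x /= /mem_subtree[w sw ->]; apply/mem_subtree.
by exists w => //; exact: leq_trans mn.
Qed.

Lemma subtree_idx_set n z : idx_set z -> [set` subtree n z] `<=` idx_set.
Proof. by move=> zI x /= /mem_subtree[w _ ->]; exact: idx_set_descend. Qed.

Lemma uniq_subtree n z : idx_set z -> uniq (subtree n z).
Proof.
elim: n z => [|n IH] z zI //=.
have [lI rI] := (idx_set_child true zI, idx_set_child false zI).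
rewrite mem_cat cat_uniq !IH // andbT; apply/andP; split.
- apply/negP => /orP[] /mem_subtree[w _ e].
  + by have := @descend_inj z zI [::] (true :: w) e.
  + by have := @descend_inj z zI [::] (false :: w) e.
- apply/hasPn => x /mem_subtree[w _ ->]; apply/negP => /mem_subtree[w' _ e].
  by have := @descend_inj z zI (false :: w) (true :: w') e.
Qed.

Lemma level_idx_set n z y : idx_set z -> y \in level n z -> idx_set y.
Proof.
elim: n z => [|n IH] z zI /=; first by rewrite inE => /eqP ->.
rewrite mem_cat => /orP[].
  exact: IH (idx_set_child true zI).
exact: IH (idx_set_child false zI).
Qed.

Lemma rowdot_level n z y : idx_set z -> y \in level n z ->
  (rowdot z + n <= rowdot y)%N.
Proof.
elim: n z => [|n IH] z zI /=; first by rewrite inE => /eqP ->; rewrite addn0.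
have := rowdot_child_gt true zI; have := rowdot_child_gt false zI.
rewrite mem_cat => /= ltR ltL /orP[/IH|/IH].
- by move/(_ (idx_set_child true zI)); lia.
- by move/(_ (idx_set_child false zI)); lia.
Qed.

Section TreeSums.
Variable R : realType.

Definition rowdotR (x : quad) : R := (rowdot x)%:R.
Definition angle (x : quad) : R := atan (rowdotR x)^-1.
Definition defect (x : quad) : R := (rowdotR x)^-1 - angle x.

Lemma summandE x :
  summand R x = (rowdotR x * rowdotR (left_child x) * rowdotR (right_child x))^-1.
Proof. by case: x => [[[a b] c] d]; rewrite /= div1r. Qed.

Lemma summand_ge0 x : 0 <= summand R x.
Proof. by rewrite summandE invr_ge0 !mulr_ge0. Qed.

Lemma rowdotR_gt0 x : idx_set x -> 0 < rowdotR x.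
Proof. by move=> xI; rewrite ltr0n rowdot_gt0. Qed.

Lemma rowdotR_children x : idx_set x ->
  rowdotR (left_child x) * rowdotR (right_child x) =
  rowdotR x * (rowdotR (left_child x) + rowdotR (right_child x)) + 1.
Proof. by move=> xI; rewrite /rowdotR -natrM rowdot_children // natrD natrM natrD. Qed.

Lemma angle_children x : idx_set x ->
  angle x = angle (left_child x) + angle (right_child x).
Proof.
move=> xI; apply: atan_inv_split (rowdotR_children xI); apply: rowdotR_gt0 => //.
  exact: (idx_set_child true).
exact: (idx_set_child false).
Qed.

Lemma summand_defect x : idx_set x ->
  summand R x = defect x - defect (left_child x) - defect (right_child x).
Proof.
move=> xI; have [lI rI] := (idx_set_child true xI, idx_set_child false xI).
rewrite summandE invf_mul3_split ?gt_eqF ?rowdotR_gt0 ?rowdotR_children //.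
rewrite /defect angle_children //; ring.
Qed.

Lemma sum_subtree n z : idx_set z ->
  \sum_(x <- subtree n z) summand R x = defect z - \sum_(x <- level n z) defect x.
Proof.
elim: n z => [|n IH] z zI /=; first by rewrite big_nil big_seq1 subrr.
have [lI rI] := (idx_set_child true zI, idx_set_child false zI).
by rewrite big_cons (summand_defect zI) !big_cat !IH //=; ring.
Qed.

Lemma sum_level_angle n z : idx_set z -> \sum_(x <- level n z) angle x = angle z.
Proof.
elim: n z => [|n IH] z zI /=; first by rewrite big_seq1.
have [lI rI] := (idx_set_child true zI, idx_set_child false zI).
by rewrite big_cat /= !IH // -angle_children.
Qed.

Lemma defect_bounds x : idx_set x -> 0 <= defect x <= (rowdotR x)^-2 * angle x.
Proof. by move=> /rowdotR_gt0; rewrite -invr_gt0 -exprVn; exact: sub_atan_bounds. Qed.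

Lemma root_values : rowdotR root = 1 /\ angle root = pi / 4.
Proof. by rewrite /angle /rowdotR /= invr1 atan1. Qed.

Lemma sum_level_defect n : 0 <= \sum_(x <- level n root) defect x <= n.+1%:R^-1.
Proof.
have rI := idx_set_root; have [_ angle_root] := root_values.
apply/andP; split.
  by rewrite big_seq sumr_ge0 // => x /(level_idx_set rI) /defect_bounds /andP[].
have defect_le x : x \in level n root -> defect x <= n.+1%:R^-1 * angle x.
  move=> xn; have xI := level_idx_set rI xn.
  have angle_ge0 : 0 <= angle x by rewrite ltW ?atan_gt0 ?invr_gt0 ?rowdotR_gt0.
  have /andP[_ defect_le] := defect_bounds xI.
  apply: le_trans defect_le (ler_wpM2r angle_ge0 _).
  have le_t : (rowdotR x)^-1 <= n.+1%:R^-1.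
    by rewrite lef_pV2 ?posrE ?rowdotR_gt0 ?ltr0n // ler_nat; have := rowdot_level rI xn.
  have t_ge0 : 0 <= (rowdotR x)^-1 by rewrite invr_ge0 ltW ?rowdotR_gt0.
  rewrite -exprVn expr2; apply: le_trans (ler_wpM2l t_ge0 le_t) _.
  have m_le1 : n.+1%:R^-1 <= 1 :> R by rewrite invf_le1 ?ltr0n ?ler1n.
  by rewrite ler_piMl ?invr_ge0 ?ler0n // (le_trans le_t m_le1).
rewrite big_seq (le_trans (ler_sum _ defect_le)) // -big_seq -mulr_sumr.
rewrite sum_level_angle // angle_root ler_piMr ?invr_ge0 ?ler0n //.
by have := pihalf_lt2 R; lra.
Qed.

Lemma fsum_subtree_root n : \sum_(x \in [set` subtree n root]) summand R x =
  1 - pi / 4 - \sum_(x <- level n root) defect x.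
Proof.
have [r1 angle_root] := root_values.
by rewrite -fsbig_seq ?uniq_subtree ?sum_subtree ?idx_set_root // /defect r1 invr1 angle_root.
Qed.

End TreeSums.

Theorem theorem11 (R : realType) :
  (\esum_(x in idx_set) ((summand R x)%:E) = (1 - pi / 4 : R)%:E)%E.
Proof.
apply: (esum_cofinal (S := fun n => [set` subtree n root])).
- by move=> x _; exact: summand_ge0.
- by move=> n; split; [exact: finite_seq | exact/subtree_idx_set/idx_set_root].
- apply: fsets_nondecreasing_bigcup; first exact: subtree_mono.
  by move=> x /descend_root_surj[w ->]; exists (size w).+1 => //; apply/mem_subtree; exists w.
- move=> n; rewrite fsum_subtree_root lerBlDr lerDl.
  by case/andP: (sum_level_defect R n).
- move=> e e0; exists (Num.truncn e^-1); rewrite fsum_subtree_root lerB //.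
  have /andP[_ /le_trans->] // := sum_level_defect R (Num.truncn e^-1).
  by rewrite ltW // invf_plt ?posrE ?ltr0n // truncnS_gt.
Qed.
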